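(* Let $C=U_d\cdots U_1$ be a Clifford circuit of depth $d$ on $n$ qubits, with $C_i=U_i\cdots U_1$ and $\mathcal C_i(s)=C_isC_i^\dagger$. For a set of qubits $A$ and an integer $w$, let $S_w^A$ be the set of phaseless Pauli operators $s\in\{I,X,Y,Z\}^{\otimes n}$ such that $\min_i|\mathcal C_i(s)|=w$ and, for every $i$, $\mathcal C_i(s)$ is supported only in $A$. Then $|S_w^A|\le d\binom{|A|}{w}3^w$.
   Context: $|P|$ denotes the weight of a Pauli operator $P$, i.e. the number of qubits on which it acts as a non-identity single-qubit Pauli (phases are ignored). The minimum and the support condition range over the timesteps $i=1,\dots,d$. *)

From HB Require Import structures.
From mathcomp Require Import all_boot all_algebra all_field.
From mathcomp Require Import boolp.
Set Implicit Arguments. Unset Strict Implicit. Unset Printing Implicit Defensive.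
Import GRing.Theory Num.Theory.
Local Open Scope ring_scope.

(* Phaseless n-qubit Pauli operators: s k = 0,1,2,3 encodes I,X,Y,Z on qubit k. *)
Definition pauli (n : nat) := {ffun 'I_n -> 'I_4}.

Definition pauli1 (a : 'I_4) : 'M[algC]_2 :=
  \matrix_(x < 2, y < 2)
    match nat_of_ord a with
    | 0%N => if x == y then 1 else 0
    | 1%N => if x == y then 0 else 1
    | 2%N => if x == y then 0 else (if (x == 0 :> nat) then - 'i else 'i)
    | _   => if x == y then (if (x == 0 :> nat) then 1 else -1) else 0
    end.

(* k-th bit of a computational-basis index x < 2^n (qubit k). *)
Definition qbit (n : nat) (x : 'I_(2 ^ n)) (k : 'I_n) : 'I_2 :=
  inord (odd (x %/ 2 ^ k)).

Definition pauli_mx (n : nat) (s : pauli n) : 'M[algC]_(2 ^ n) :=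
  \matrix_(x, y) \prod_(k < n) pauli1 (s k) (qbit x k) (qbit y k).

Definition adjmx (m : nat) (U : 'M[algC]_m) : 'M[algC]_m := map_mx (fun z : algC => z^*) U^T.

Definition unitary_mx (m : nat) (U : 'M[algC]_m) : Prop := U *m adjmx U = 1%:M.

(* t is the phaseless image U s U^dagger of s: U P_s U^dagger = c P_t for a phase c *)
Definition conj_img (n : nat) (U : 'M[algC]_(2 ^ n)) (s t : pauli n) : Prop :=
  exists c : algC, U *m pauli_mx s *m adjmx U = c *: pauli_mx t.

Definition clifford (n : nat) (U : 'M[algC]_(2 ^ n)) : Prop :=
  unitary_mx U /\ forall s : pauli n, exists t : pauli n, conj_img U s t.

Definition pweight (n : nat) (s : pauli n) : nat := #|[set k | s k != 0]|.
Definition supported_in (n : nat) (A : {set 'I_n}) (s : pauli n) : Prop :=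
  forall k, s k != 0 -> k \in A.

(* Layers U_1, ..., U_d are given as U 0, ..., U (d-1);
   partial circuit C_i = U_i ... U_1 is circ_prefix U i. *)
Fixpoint circ_prefix (n : nat) (U : nat -> 'M[algC]_(2 ^ n)) (i : nat) : 'M[algC]_(2 ^ n) :=
  match i with
  | 0%N => 1%:M
  | i'.+1 => U i' *m circ_prefix U i'
  end.

Definition in_SwA (n d : nat) (U : nat -> 'M[algC]_(2 ^ n)) (A : {set 'I_n}) (w : nat)
    (s : pauli n) : Prop :=
  (forall i : nat, (1 <= i <= d)%N -> forall t, conj_img (circ_prefix U i) s t ->
      supported_in A t) /\
  (exists i : nat, (1 <= i <= d)%N /\
      exists t, conj_img (circ_prefix U i) s t /\ pweight t = w) /\
  (forall i : nat, (1 <= i <= d)%N -> forall t, conj_img (circ_prefix U i) s t ->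
      (w <= pweight t)%N).

Definition SwA (n d : nat) (U : nat -> 'M[algC]_(2 ^ n)) (A : {set 'I_n}) (w : nat)
  : {set pauli n} := [set s | `[< in_SwA d U A w s >]].

From mathcomp Require Import all_boot all_algebra all_field.
From mathcomp Require Import boolp.
Set Implicit Arguments. Unset Strict Implicit. Unset Printing Implicit Defensive.
Import GRing.Theory Num.Theory.

(* Every s in S_w^A is sent by some prefix C_i, 1 <= i <= d, to a Pauli t of
   weight w supported in A, and there are at most C(|A|, w) 3^w such t.
   Conjugation by a unitary is injective on phaseless Paulis, because Pauli
   matrices are orthogonal for the trace form, tr (P_s P_t) = 2^n [s = t], so
   that a P_s = b P_t with a <> 0 forces s = t.  Hence s is determined by the
   pair (i, t); only the unitarity of the Clifford layers is used. *)

Lemma eq_binary_digits n x y : x < 2 ^ n -> y < 2 ^ n ->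
  (forall k, k < n -> odd (x %/ 2 ^ k) = odd (y %/ 2 ^ k)) -> x = y.
Proof.
elim: n x y => [|n IHn] x y; first by rewrite !ltnS !leqn0 => /eqP-> /eqP->.
move=> ltx lty eq_bits.
have eq_odd : odd x = odd y by have := eq_bits 0 isT; rewrite !divn1.
have eq_half : x./2 = y./2.
  apply: IHn; rewrite -?divn2 ?ltn_divLR -?expnSr // => k ltkn.
  by rewrite -!divnMA -expnS; apply: eq_bits.
by rewrite -[x]odd_double_half -[y]odd_double_half eq_odd eq_half.
Qed.

Local Open Scope ring_scope.

Lemma trace_pauli1M (u v : 'I_4) :
  \tr (pauli1 u *m pauli1 v) = (u == v)%:R *+ 2.
Proof.
rewrite /mxtrace !big_ord_recl !big_ord0 !mxE !big_ord_recl !big_ord0.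
rewrite /pauli1 !mxE /=.
case: u v => [[|[|[|[|?]]]] ?] // [[|[|[|[|?]]]] ?] //=.
all: by rewrite ?(mulr0, mul0r, add0r, addr0, mulr1, mul1r, mulrN, mulNr,
                  mulCii, opprK, subrr, addNr, mul0rn, mulr2n).
Qed.

Section PauliMatrices.
Variable n : nat.

Definition qbits (x : 'I_(2 ^ n)) : {ffun 'I_n -> 'I_2} := [ffun k => qbit x k].

Lemma qbits_inj : injective qbits.
Proof.
have qbitE x k : qbit x k = odd (x %/ 2 ^ k) :> nat by rewrite inordK; case: odd.
move=> x y /ffunP eq_xy; apply/val_inj/(eq_binary_digits (ltn_ord x) (ltn_ord y)).
move=> k ltkn; have /(congr1 val) := eq_xy (Ordinal ltkn).
by rewrite !ffunE /= !qbitE => /eqP; case: odd; case: odd.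
Qed.

Lemma qbits_bij : bijective qbits.
Proof. by apply: inj_card_bij qbits_inj _; rewrite card_ffun !card_ord. Qed.

Lemma sum_qbits (R : nmodType) (F : {ffun 'I_n -> 'I_2} -> R) :
  \sum_x F (qbits x) = \sum_f F f.
Proof. by rewrite [RHS](reindex qbits) //; exact: onW_bij qbits_bij. Qed.

Lemma trace_pauli_mxM (s t : pauli n) :
  \tr (pauli_mx s *m pauli_mx t) = \prod_k \tr (pauli1 (s k) *m pauli1 (t k)).
Proof.
pose h k a b := pauli1 (s k) a b * pauli1 (t k) b a.
transitivity (\sum_(f : {ffun 'I_n -> 'I_2}) \sum_(g : {ffun 'I_n -> 'I_2})
                \prod_k h k (f k) (g k)).
  rewrite /mxtrace -sum_qbits; apply: eq_bigr => x _.
  rewrite mxE -sum_qbits; apply: eq_bigr => y _.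
  by rewrite !mxE -big_split; apply: eq_bigr => k _; rewrite !ffunE.
under [LHS]eq_bigr => f _ do rewrite -(bigA_distr_bigA (fun k => h k (f k))).
rewrite -(bigA_distr_bigA (fun k a => \sum_b h k a b)).
by apply: eq_bigr => k _; apply: eq_bigr => a _; rewrite mxE.
Qed.

Lemma trace_pauli_mx_mul (s t : pauli n) :
  \tr (pauli_mx s *m pauli_mx t) = (s == t)%:R * 2 ^+ n.
Proof.
rewrite trace_pauli_mxM; under eq_bigr do rewrite trace_pauli1M.
have [<- | neq_st] := eqP.
  by under eq_bigr do rewrite eqxx; rewrite prodr_const card_ord mul1r.
have [k neq_k] : exists k, s k != t k.
  apply/existsP; apply: contra_notT neq_st => /existsPn eq_st.
  by apply/ffunP => k; apply/eqP/negbNE/eq_st.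
by rewrite (bigD1 k) //= (negbTE neq_k) mul0rn !mul0r.
Qed.

Let pow2_neq0 : 2 ^+ n != 0 :> algC.
Proof. by rewrite expf_eq0 pnatr_eq0 andbF. Qed.

Lemma pauli_mx_neq0 (s : pauli n) : pauli_mx s != 0.
Proof.
apply/eqP => s0; move/eqP: (trace_pauli_mx_mul s s).
by rewrite s0 mul0mx mxtrace0 eqxx mul1r eq_sym (negbTE pow2_neq0).
Qed.

Lemma scale_pauli_mx_inj (a b : algC) (s t : pauli n) :
  a != 0 -> a *: pauli_mx s = b *: pauli_mx t -> s = t.
Proof.
move=> a_neq0 /(congr1 (fun M => \tr (M *m pauli_mx s))).
rewrite -!scalemxAl !mxtraceZ !trace_pauli_mx_mul eqxx mul1r.
have [-> // | _] := t =P s; rewrite mul0r mulr0 => /eqP.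
by rewrite mulf_eq0 (negbTE a_neq0) (negbTE pow2_neq0).
Qed.

End PauliMatrices.

Section Unitary.
Variable m : nat.
Implicit Types A B M : 'M[algC]_m.

Lemma adjmxM A B : adjmx (A *m B) = adjmx B *m adjmx A.
Proof.
apply/matrixP => i j; rewrite !mxE rmorph_sum; apply: eq_bigr => k _.
by rewrite !mxE rmorphM mulrC.
Qed.

Lemma adjmx1 : adjmx (1%:M : 'M[algC]_m) = 1%:M.
Proof.
by apply/matrixP => i j; rewrite !mxE eq_sym; case: eqP; rewrite ?conjC1 ?conjC0.
Qed.

Lemma unitary_mx1 : unitary_mx (1%:M : 'M[algC]_m).
Proof. by rewrite /unitary_mx adjmx1 mul1mx. Qed.

Lemma unitary_mxM A B : unitary_mx A -> unitary_mx B -> unitary_mx (A *m B).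
Proof.
rewrite /unitary_mx adjmxM => AU BU.
by rewrite mulmxA -[A *m B *m _]mulmxA BU mulmx1 AU.
Qed.

End Unitary.

Lemma circ_prefix_unitary n (U : nat -> 'M[algC]_(2 ^ n)) i :
  (forall j, (j < i)%N -> unitary_mx (U j)) -> unitary_mx (circ_prefix U i).
Proof.
elim: i => [|i IHi] UU /=; first exact: unitary_mx1.
by apply: unitary_mxM; [apply: UU | apply: IHi => j /ltnW/UU].
Qed.

Lemma conj_img_inj n (M : 'M[algC]_(2 ^ n)) (s s' t : pauli n) :
  unitary_mx M -> conj_img M s t -> conj_img M s' t -> s = s'.
Proof.
move=> MU [c def_t] [c' def_t'].
have MU' : adjmx M *m M = 1%:M := mulmx1C MU.
have unconj u e : M *m pauli_mx u *m adjmx M = e *: pauli_mx t ->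
    pauli_mx u = e *: (adjmx M *m pauli_mx t *m M).
  move=> def_e; rewrite scalemxAl scalemxAr -def_e !mulmxA MU' mul1mx.
  by rewrite -mulmxA MU' mulmx1.
have c'_neq0 : c' != 0.
  apply: contraNneq (pauli_mx_neq0 s') => c'0.
  by rewrite (unconj _ _ def_t') c'0 scale0r.
apply: (scale_pauli_mx_inj (b := c) c'_neq0).
by rewrite (unconj _ _ def_t) (unconj _ _ def_t') !scalerA mulrC.
Qed.

Lemma leq_card_rel_preimset (S T : finType) (R : S -> T -> Prop) (B : {set T}) :
  (forall s1 s2 t, R s1 t -> R s2 t -> s1 = s2) ->
  (#|[set s | [exists t in B, `[< R s t >]]]| <= #|B|)%N.
Proof.
move=> R_inj; set X := [set s | _].
pose g s := [pick t in B | `[< R s t >]].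
have gP s : s \in X -> exists2 t, g s = Some t & t \in B /\ R s t.
  rewrite inE => /exists_inP[t tB Rst]; rewrite /g.
  case: pickP => [t' /andP[t'B /asboolP] | /(_ t)]; first by exists t'.
  by rewrite tB Rst.
rewrite -(card_in_imset (f := g)).
  apply: leq_trans (leq_imset_card Some B).
  apply/subset_leq_card/subsetP => _ /imsetP[s /gP[t -> [tB _]] ->].
  exact: imset_f.
move=> s1 s2 /gP[t1 -> [_ R1]] /gP[t2 -> [_ R2]] [eq_t].
by rewrite eq_t in R1; exact: R_inj R1 R2.
Qed.

Definition paulis_in n (A : {set 'I_n}) (w : nat) : {set pauli n} :=
  [set t | (pweight t == w) && ([set k | t k != 0] \subset A)].

Lemma card_paulis_in n (A : {set 'I_n}) w :
  (#|paulis_in A w| <= 'C(#|A|, w) * 3 ^ w)%N.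
Proof.
pose D := [set B : {set 'I_n} | B \subset A & #|B| == w].
pose on_supp (B : {set 'I_n}) := [set t : pauli n | t \in pffun_on 0 B (predC1 0)].
have sub_cover : paulis_in A w \subset cover (on_supp @: D).
  apply/subsetP => t; rewrite inE => /andP[/eqP wt suppA].
  apply/bigcupP; exists (on_supp [set k | t k != 0]).
    by apply: imset_f; rewrite inE suppA -wt /=.
  rewrite inE; apply/pffun_onP; split.
    by apply/subsetP => k; rewrite supportE inE.
  by move=> _ /imageP[k + ->]; rewrite !inE.
apply: leq_trans (subset_leq_card sub_cover) _.
apply: leq_trans (leq_card_cover _) _.
apply: leq_trans (_ : \sum_(X in on_supp @: D) 3 ^ w <= _)%N.
  apply: leq_sum => X /imsetP[B + ->]; rewrite inE => /andP[_ /eqP <-].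
  by rewrite cardsE card_pffun_on cardC1 card_ord.
by rewrite sum_nat_const -cards_draws -/D leq_mul2r leq_imset_card orbT.
Qed.

Lemma SwA_sub_preimset n d (U : nat -> 'M[algC]_(2 ^ n)) (A : {set 'I_n}) w :
  SwA d U A w \subset [set s | [exists it in setX [set: 'I_d] (paulis_in A w),
                                  `[< conj_img (circ_prefix U it.1.+1) s it.2 >]]].
Proof.
apply/subsetP => s; rewrite inE.
case/asboolP=> suppA [[i [/andP[i_gt0 lid] [t [st wt]]]] _].
case: i i_gt0 lid st => // i _ ltid st.
rewrite inE; apply/exists_inP; exists (Ordinal ltid, t); last exact/asboolP.
rewrite !inE wt eqxx; apply/subsetP => k; rewrite inE.
exact: suppA st k.
Qed.

Theorem lemma4 (n d : nat) (U : nat -> 'M[algC]_(2 ^ n))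
  (HU : forall j : nat, (j < d)%N -> clifford (U j))
  (A : {set 'I_n}) (w : nat) :
  (#|SwA d U A w| <= d * 'C(#|A|, w) * 3 ^ w)%N.
Proof.
apply: leq_trans (subset_leq_card (SwA_sub_preimset d U A w)) _.
apply: leq_trans; first apply: leq_card_rel_preimset.
  move=> s1 s2 [i t]; apply/conj_img_inj/circ_prefix_unitary => j ltji.
  by case: (HU j (leq_trans ltji (ltn_ord i))).
apply: (leq_trans (eq_leq (cardsX _ _))).
by rewrite cardsT card_ord -mulnA leq_mul2l card_paulis_in orbT.
Qed.
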